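(* Suppose $T\in L_{aut}(\mathcal B)$ has the shadowing property and is not hyperbolic. Then for every $\varepsilon>0$ there is $x\in\mathcal B$ such that $1-\varepsilon<|T^nx|<1+\varepsilon$ for every $n\in\mathbb Z$.
   Context: $\mathcal B$ is a Banach space. A $\delta$-pseudo-orbit is a sequence $(x_n)_{n\in\mathbb Z}$ with $|x_{n+1}-Tx_n|<\delta$; $y$ $\varepsilon$-shadows it if $|x_n-T^ny|<\varepsilon$ for all $n$. $T$ has the shadowing property if for every $\varepsilon>0$ there is $\delta>0$ such that every $\delta$-pseudo-orbit is $\varepsilon$-shadowed by some point. $T$ is hyperbolic if its spectrum does not meet the unit circle. *)

From Stdlib Require Import Reals ZArith.
Open Scope R_scope.

Record RBanach := {
  bcar :> Type;
  bzero : bcar;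
  badd : bcar -> bcar -> bcar;
  bopp : bcar -> bcar;
  bscal : R -> bcar -> bcar;
  bnorm : bcar -> R;
  badd_assoc : forall x y z, badd x (badd y z) = badd (badd x y) z;
  badd_comm : forall x y, badd x y = badd y x;
  badd_zero : forall x, badd x bzero = x;
  badd_opp : forall x, badd x (bopp x) = bzero;
  bscal_one : forall x, bscal 1 x = x;
  bscal_assoc : forall a b x, bscal a (bscal b x) = bscal (a * b) x;
  bscal_distr_l : forall a x y, bscal a (badd x y) = badd (bscal a x) (bscal a y);
  bscal_distr_r : forall a b x, bscal (a + b) x = badd (bscal a x) (bscal b x);
  bnorm_nonneg : forall x, 0 <= bnorm x;
  bnorm_eq0 : forall x, bnorm x = 0 -> x = bzero;
  bnorm_scal : forall a x, bnorm (bscal a x) = Rabs a * bnorm x;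
  bnorm_triangle : forall x y, bnorm (badd x y) <= bnorm x + bnorm y;
  bcomplete : forall u : nat -> bcar,
    (forall eps, eps > 0 -> exists N, forall m n, (m >= N)%nat -> (n >= N)%nat ->
        bnorm (badd (u m) (bopp (u n))) < eps) ->
    exists l, forall eps, eps > 0 -> exists N, forall n, (n >= N)%nat ->
        bnorm (badd (u n) (bopp l)) < eps
}.

Arguments bzero {_}.
Arguments badd {_}.
Arguments bopp {_}.
Arguments bscal {_}.
Arguments bnorm {_}.

Definition bsub {B : RBanach} (x y : B) : B := badd x (bopp y).

Definition bounded_linear {B : RBanach} (T : B -> B) : Prop :=
  (forall x y, T (badd x y) = badd (T x) (T y)) /\
  (forall a x, T (bscal a x) = bscal a (T x)) /\
  (exists C, forall x, bnorm (T x) <= C * bnorm x).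

Definition is_aut_with_inverse {B : RBanach} (T S : B -> B) : Prop :=
  bounded_linear T /\ bounded_linear S /\
  (forall x, T (S x) = x) /\ (forall x, S (T x) = x).

Definition zpow {B : RBanach} (T S : B -> B) (n : Z) (x : B) : B :=
  match n with
  | Z0 => x
  | Zpos p => Nat.iter (Pos.to_nat p) T x
  | Zneg p => Nat.iter (Pos.to_nat p) S x
  end.

Definition pseudo_orbit {B : RBanach} (T : B -> B) (delta : R) (x : Z -> B) : Prop :=
  forall n : Z, bnorm (bsub (x (n + 1)%Z) (T (x n))) < delta.

Definition eps_shadows {B : RBanach} (T S : B -> B) (eps : R) (y : B) (x : Z -> B) : Prop :=
  forall n : Z, bnorm (bsub (x n) (zpow T S n y)) < eps.

Definition shadowing_property {B : RBanach} (T S : B -> B) : Prop :=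
  forall eps, eps > 0 -> exists delta, delta > 0 /\
    forall x : Z -> B, pseudo_orbit T delta x -> exists y, eps_shadows T S eps y x.

(* The complexified operator T_C - lambda, lambda = a + i b, acting on
   B_C = B x B via (x + i y) |-> (Tx - a x + b y) + i (Ty - b x - a y). *)
Definition complexified_shift {B : RBanach} (T : B -> B) (a b : R) (p : B * B) : B * B :=
  let (x, y) := p in
  (badd (bsub (T x) (bscal a x)) (bscal b y),
   bsub (bsub (T y) (bscal b x)) (bscal a y)).

(* lambda = a + i b is in the spectrum of T iff T_C - lambda is not bijective
   (for bounded operators bijectivity = invertibility in L(B_C), open mapping). *)
Definition in_spectrum {B : RBanach} (T : B -> B) (a b : R) : Prop :=
  ~ ((forall p q, complexified_shift T a b p = complexified_shift T a b q -> p = q) /\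
     (forall r, exists p, complexified_shift T a b p = r)).

Definition hyperbolic {B : RBanach} (T : B -> B) : Prop :=
  forall a b : R, a * a + b * b = 1 -> ~ in_spectrum T a b.

(* If e^{it} lies in the spectrum, T_C - e^{it} on the complexification B x B is
   not bounded below.  Otherwise shadowing the pseudo-orbit
   x_{n+1} = T_C x_n - e^{int} r and averaging the untwisted shadowing errors
   e^{-int} (x_n - T_C^n y) yields approximate solutions of (T_C - e^{it}) x = r,
   hence by completeness exact ones, so T_C - e^{it} would be invertible.
   The same shadow-and-average argument moves an approximate eigenvector for
   e^{it} to one for e^{it'} when |t' - t| is smaller than a constant depending
   only on the shadowing constant, so 1 is an approximate eigenvalue as well.
   A unit vector v with |Tv - v| small is a constant pseudo-orbit, and the
   orbit of a point shadowing it stays within eps of the unit sphere. *)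

From Stdlib Require Import Reals ZArith Lra Lia Classical.
Open Scope R_scope.

Arguments badd_assoc {r}. Arguments badd_comm {r}. Arguments badd_zero {r}.
Arguments badd_opp {r}. Arguments bscal_one {r}. Arguments bscal_assoc {r}.
Arguments bscal_distr_l {r}. Arguments bscal_distr_r {r}. Arguments bnorm_nonneg {r}.
Arguments bnorm_eq0 {r}. Arguments bnorm_scal {r}. Arguments bnorm_triangle {r}.

Section VectorAlgebra.
Context {E : RBanach}.
Implicit Types (x y z : E) (a b : R).

Lemma badd0l x : badd bzero x = x.
Proof. rewrite badd_comm; apply badd_zero. Qed.

Lemma badd_oppK x y : badd (badd x y) (bopp y) = x.
Proof. rewrite <- badd_assoc, badd_opp; apply badd_zero. Qed.

Lemma bscal0l x : bscal 0 x = bzero.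
Proof.
  rewrite <- (badd_oppK (bscal 0 x) (bscal 0 x)), <- bscal_distr_r, Rplus_0_r.
  apply badd_opp.
Qed.

Lemma bscal0r a : bscal a (@bzero E) = bzero.
Proof. rewrite <- (bscal0l bzero), bscal_assoc, Rmult_0_r; reflexivity. Qed.

Lemma bopp_scal x : bopp x = bscal (-1) x.
Proof.
  rewrite <- (badd0l (bopp x)), <- (bscal0l x).
  replace 0 with (-1 + 1) by ring.
  rewrite bscal_distr_r, bscal_one, <- badd_assoc, badd_opp; apply badd_zero.
Qed.

Lemma bnorm0 : bnorm (@bzero E) = 0.
Proof. rewrite <- (bscal0l bzero), bnorm_scal, Rabs_R0; ring. Qed.

Lemma bnorm_opp x : bnorm (bopp x) = bnorm x.
Proof. rewrite bopp_scal, bnorm_scal, Rabs_left by lra; ring. Qed.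

Lemma bopp_add x y : bopp (badd x y) = badd (bopp x) (bopp y).
Proof. rewrite !bopp_scal; apply bscal_distr_l. Qed.

Lemma bopp_scal_r a x : bopp (bscal a x) = bscal (- a) x.
Proof. rewrite bopp_scal, bscal_assoc; f_equal; ring. Qed.

Lemma bsub_diag x : bsub x x = bzero.
Proof. apply badd_opp. Qed.

Lemma bsub0r x : bsub x bzero = x.
Proof. unfold bsub; rewrite bopp_scal, bscal0r; apply badd_zero. Qed.

Lemma bnorm_sub0l x : bnorm (bsub bzero x) = bnorm x.
Proof. unfold bsub; rewrite badd0l; apply bnorm_opp. Qed.

Lemma bsubK x y : badd (bsub x y) y = x.
Proof. unfold bsub; rewrite <- badd_assoc, (badd_comm _ y), badd_opp; apply badd_zero. Qed.

Lemma bsub_chain x y z : bsub x z = badd (bsub x y) (bsub y z).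
Proof. unfold bsub at 3; rewrite badd_assoc, bsubK; reflexivity. Qed.

Lemma bnorm_sub_triangle x y z : bnorm (bsub x z) <= bnorm (bsub x y) + bnorm (bsub y z).
Proof. rewrite (bsub_chain x y z); apply bnorm_triangle. Qed.

Lemma bnorm_subC x y : bnorm (bsub x y) = bnorm (bsub y x).
Proof.
  rewrite <- bnorm_opp; unfold bsub.
  rewrite bopp_add, !bopp_scal, bscal_assoc, badd_comm.
  replace (-1 * -1) with 1 by ring; rewrite bscal_one; reflexivity.
Qed.

Lemma bnorm_sub_ge x y : bnorm x - bnorm y <= bnorm (bsub x y).
Proof. pose proof (bnorm_triangle (bsub x y) y); rewrite bsubK in H; lra. Qed.

Lemma bnorm_sub_le x y : bnorm (bsub x y) <= bnorm x + bnorm y.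
Proof. rewrite <- (bnorm_opp y); apply bnorm_triangle. Qed.

Lemma bsub_eq0 x y : bsub x y = bzero -> x = y.
Proof. intros H; rewrite <- (bsubK x y), H; apply badd0l. Qed.

Lemma bscal_sub a x y : bscal a (bsub x y) = bsub (bscal a x) (bscal a y).
Proof. unfold bsub; rewrite bscal_distr_l, !bopp_scal, !bscal_assoc, Rmult_comm; reflexivity. Qed.

Lemma bsub_add_add x y x' y' : bsub (badd x y) (badd x' y') = badd (bsub x x') (bsub y y').
Proof.
  unfold bsub; rewrite bopp_add, !badd_assoc; f_equal.
  rewrite <- !badd_assoc; f_equal; apply badd_comm.
Qed.

Lemma bsub_subC x y z : bsub (bsub x y) z = bsub (bsub x z) y.
Proof. unfold bsub; rewrite <- !badd_assoc, (badd_comm (bopp y)); reflexivity. Qed.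

Lemma bnorm_normalize x : bnorm x > 0 -> bnorm (bscal (/ bnorm x) x) = 1.
Proof. intros Hx; rewrite bnorm_scal, Rabs_pos_eq; [field|left; apply Rinv_0_lt_compat]; lra. Qed.

Lemma bnorm_small_eq0 x : (forall e, e > 0 -> bnorm x < e) -> x = bzero.
Proof.
  intros H; apply bnorm_eq0; pose proof (bnorm_nonneg x).
  destruct (Req_dec (bnorm x) 0) as [|Hne]; auto.
  specialize (H (bnorm x / 2)); lra.
Qed.

End VectorAlgebra.

Record is_linear {E : RBanach} (f : E -> E) : Prop := {
  linear_add : forall x y, f (badd x y) = badd (f x) (f y);
  linear_scal : forall a x, f (bscal a x) = bscal a (f x)
}.

Section LinearMaps.
Context {E : RBanach}.
Implicit Types (f h : E -> E).

Lemma linear0 f : is_linear f -> f bzero = bzero.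
Proof. intros Hf; rewrite <- (bscal0l bzero), (linear_scal f Hf), !bscal0l; reflexivity. Qed.

Lemma linear_sub f : is_linear f -> forall x y, f (bsub x y) = bsub (f x) (f y).
Proof. intros Hf x y; unfold bsub; rewrite (linear_add f Hf), !bopp_scal, (linear_scal f Hf); reflexivity. Qed.

Lemma is_linear_sub f h : is_linear f -> is_linear h -> is_linear (fun x => bsub (f x) (h x)).
Proof.
  intros Hf Hh; split.
  - intros x y; rewrite (linear_add f Hf), (linear_add h Hh); apply bsub_add_add.
  - intros a x; rewrite (linear_scal f Hf), (linear_scal h Hh); symmetry; apply bscal_sub.
Qed.

Lemma bounded_linear_is_linear f : bounded_linear f -> is_linear f.
Proof. intros [Ha [Hs _]]; split; assumption. Qed.

Fixpoint sumN (u : nat -> E) (n : nat) : E :=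
  match n with O => bzero | S k => badd (sumN u k) (u k) end.

Definition cesaro (u : nat -> E) (n : nat) : E := bscal (/ INR n) (sumN u n).

Lemma linear_sumN f u n : is_linear f -> f (sumN u n) = sumN (fun k => f (u k)) n.
Proof.
  intros Hf; induction n as [|n IH]; simpl; [apply linear0; auto|].
  rewrite (linear_add f Hf), IH; reflexivity.
Qed.

Lemma sumN_sub u v n : sumN (fun k => bsub (u k) (v k)) n = bsub (sumN u n) (sumN v n).
Proof. induction n as [|n IH]; simpl; [rewrite bsub0r|rewrite IH, bsub_add_add]; reflexivity. Qed.

Lemma sumN_telescope g n : sumN (fun k => bsub (g (S k)) (g k)) n = bsub (g n) (g O).
Proof.
  induction n as [|n IH]; simpl; [symmetry; apply bsub_diag|].
  rewrite IH, badd_comm, <- bsub_chain; reflexivity.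
Qed.

Lemma sumN_const x n : sumN (fun _ => x) n = bscal (INR n) x.
Proof.
  induction n as [|n IH]; simpl sumN; [symmetry; apply bscal0l|].
  rewrite IH, S_INR, bscal_distr_r, bscal_one; reflexivity.
Qed.

Lemma sumN_ext u v n : (forall k, u k = v k) -> sumN u n = sumN v n.
Proof. intros H; induction n as [|n IH]; simpl; [|rewrite IH, H]; reflexivity. Qed.

Lemma bnorm_sumN_le u n M : (forall k, (k < n)%nat -> bnorm (u k) <= M) ->
  bnorm (sumN u n) <= INR n * M.
Proof.
  induction n as [|n IH]; intros Hu; simpl sumN; [rewrite bnorm0; simpl; lra|].
  pose proof (bnorm_triangle (sumN u n) (u n)).
  assert (bnorm (sumN u n) <= INR n * M) by (apply IH; intros; apply Hu; lia).
  specialize (Hu n ltac:(lia)); rewrite S_INR; lra.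
Qed.

Lemma cesaro_const x n : (0 < n)%nat -> cesaro (fun _ => x) n = x.
Proof.
  intros Hn; unfold cesaro; rewrite sumN_const, bscal_assoc, Rinv_l, bscal_one; auto.
  apply not_0_INR; lia.
Qed.

Lemma cesaro_sub u x n : (0 < n)%nat ->
  bsub (cesaro u n) x = cesaro (fun k => bsub (u k) x) n.
Proof.
  intros Hn; rewrite <- (cesaro_const x n Hn) at 1; unfold cesaro.
  rewrite <- bscal_sub, <- sumN_sub; reflexivity.
Qed.

Lemma bnorm_cesaro_le u n M : (0 < n)%nat -> (forall k, (k < n)%nat -> bnorm (u k) <= M) ->
  bnorm (cesaro u n) <= M.
Proof.
  intros Hn Hu; pose proof (lt_0_INR n Hn).
  unfold cesaro; rewrite bnorm_scal, Rabs_pos_eq by (left; apply Rinv_0_lt_compat; auto).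
  apply (Rmult_le_reg_l (INR n)); auto.
  rewrite <- Rmult_assoc, Rinv_r by lra; rewrite Rmult_1_l; apply bnorm_sumN_le; auto.
Qed.

Lemma cesaro_telescope f u g r n M : is_linear f -> (0 < n)%nat ->
  (forall k, bsub (f (u k)) r = bsub (g (S k)) (g k)) -> (forall k, bnorm (g k) <= M) ->
  bnorm (bsub (f (cesaro u n)) r) <= 2 * M / INR n.
Proof.
  intros Hf Hn Hu Hg; pose proof (lt_0_INR n Hn).
  unfold cesaro at 1; rewrite (linear_scal f Hf), (linear_sumN f u n Hf).
  fold (cesaro (fun k => f (u k)) n); rewrite cesaro_sub by auto.
  unfold cesaro; rewrite (sumN_ext _ _ _ Hu), sumN_telescope, bnorm_scal.
  rewrite Rabs_pos_eq by (left; apply Rinv_0_lt_compat; auto).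
  pose proof (bnorm_sub_le (g n) (g O)); pose proof (Hg n); pose proof (Hg O).
  unfold Rdiv; rewrite (Rmult_comm (2 * M)).
  apply Rmult_le_compat_l; [left; apply Rinv_0_lt_compat|]; lra.
Qed.

End LinearMaps.

Lemma eventually_div_lt M e : e > 0 -> exists N, forall n, (N <= n)%nat -> M / INR (S n) < e.
Proof.
  intros He; destruct (INR_archimed e M He) as [N HN]; exists N; intros n Hn.
  assert (INR N <= INR (S n)) by (apply le_INR; lia).
  pose proof (lt_0_INR (S n) ltac:(lia)).
  apply (Rmult_lt_reg_r (INR (S n))); auto.
  unfold Rdiv; rewrite Rmult_assoc, Rinv_l by lra; nra.
Qed.

Section BoundedBelow.
Context {E : RBanach} (f : E -> E).
Hypothesis f_linear : is_linear f.
Variables (C c : R).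
Hypothesis f_bounded : forall x, bnorm (f x) <= C * bnorm x.
Hypothesis c_pos : c > 0.
Hypothesis f_bounded_below : forall x, c * bnorm x <= bnorm (f x).

Lemma bounded_below_inj x y : f x = f y -> x = y.
Proof.
  intros Hxy; apply bsub_eq0, bnorm_eq0.
  pose proof (f_bounded_below (bsub x y)); pose proof (bnorm_nonneg (bsub x y)).
  rewrite (linear_sub f f_linear), Hxy, bsub_diag, bnorm0 in H.
  apply Rle_antisym; auto; apply (Rmult_le_reg_l c); lra.
Qed.

Lemma bounded_below_solve (a : nat -> E) r M :
  (forall k, bnorm (bsub (f (a k)) r) <= M / INR (S k)) -> exists x, f x = r.
Proof.
  intros Ha.
  destruct (bcomplete E a) as [l Hl].
  { intros e He; destruct (eventually_div_lt M (c * e / 2)) as [N HN]; [nra|].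
    exists N; intros m n Hm Hn; fold (bsub (a m) (a n)).
    apply (Rmult_lt_reg_l c); auto.
    eapply Rle_lt_trans; [apply f_bounded_below|].
    rewrite (linear_sub f f_linear).
    pose proof (bnorm_sub_triangle (f (a m)) r (f (a n))); rewrite (bnorm_subC r) in H.
    pose proof (Ha m); pose proof (Ha n); pose proof (HN m Hm); pose proof (HN n Hn); lra. }
  exists l; apply bsub_eq0, bnorm_small_eq0; intros e He.
  destruct (Hl (e / (2 * (Rabs C + 1)))) as [N1 HN1].
  { apply Rdiv_lt_0_compat; [|pose proof (Rabs_pos C)]; lra. }
  destruct (eventually_div_lt M (e / 2)) as [N2 HN2]; [lra|].
  set (n := Nat.max N1 N2).
  specialize (HN1 n ltac:(lia)); specialize (HN2 n ltac:(lia)).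
  fold (bsub (a n) l) in HN1; rewrite bnorm_subC in HN1.
  pose proof (bnorm_sub_triangle (f l) (f (a n)) r); rewrite <- (linear_sub f f_linear) in H.
  pose proof (f_bounded (bsub l (a n))); pose proof (Ha n).
  pose proof (Rle_abs C); pose proof (Rabs_pos C); pose proof (bnorm_nonneg (bsub l (a n))).
  assert (C * bnorm (bsub l (a n)) <= Rabs C * (e / (2 * (Rabs C + 1)))).
  { apply (Rle_trans _ (Rabs C * bnorm (bsub l (a n))));
      [apply Rmult_le_compat_r|apply Rmult_le_compat_l]; lra. }
  assert (Rabs C * (e / (2 * (Rabs C + 1))) < e / 2).
  { apply (Rmult_lt_reg_r (2 * (Rabs C + 1))); [lra|].
    field_simplify; lra. }
  lra.
Qed.

End BoundedBelow.

Section LinearShadowing.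
Context {E : RBanach} (T Tinv : E -> E).
Hypothesis T_linear : is_linear T.
Hypothesis Tinv_linear : is_linear Tinv.

Lemma zpow_scal n a y : zpow T Tinv n (bscal a y) = bscal a (zpow T Tinv n y).
Proof.
  assert (Hiter : forall f, is_linear f -> forall k, Nat.iter k f (bscal a y) = bscal a (Nat.iter k f y)).
  { intros f Hf k; induction k as [|k IH]; simpl; [|rewrite IH, (linear_scal f Hf)]; reflexivity. }
  destruct n; simpl; auto.
Qed.

(* Shadowing of linear maps is scale invariant. *)
Lemma shadowing_linear_bound : shadowing_property T Tinv -> exists K, K > 0 /\
  forall eta, eta > 0 -> forall x, pseudo_orbit T eta x ->
  exists y, eps_shadows T Tinv (K * eta) y x.
Proof.
  intros Hs; destruct (Hs 1 Rlt_0_1) as [d [Hd Hsh]].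
  exists (/ d); split; [apply Rinv_0_lt_compat; auto|].
  intros eta Heta x Hx; set (s := d / eta).
  assert (Hs0 : s > 0) by (apply Rdiv_lt_0_compat; auto).
  destruct (Hsh (fun n => bscal s (x n))) as [y Hy].
  { intros n; rewrite (linear_scal T T_linear), <- bscal_sub, bnorm_scal, Rabs_pos_eq by lra.
    specialize (Hx n); replace d with (s * eta) by (unfold s; field; lra).
    apply Rmult_lt_compat_l; auto. }
  exists (bscal (/ s) y); intros n; specialize (Hy n); simpl in Hy.
  rewrite zpow_scal, <- (bscal_one (x n)), <- (Rinv_l s) by lra.
  rewrite <- bscal_assoc, <- bscal_sub, bnorm_scal, Rabs_pos_eq by (left; apply Rinv_0_lt_compat; auto).
  replace (/ d * eta) with (/ s * 1) by (unfold s; field; lra).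
  apply Rmult_lt_compat_l; auto; apply Rinv_0_lt_compat; auto.
Qed.

End LinearShadowing.

Section ProductSpace.
Context (B : RBanach).

Definition prod_norm (p : B * B) : R := bnorm (fst p) + bnorm (snd p).

Lemma prod_complete (u : nat -> B * B) :
  (forall eps, eps > 0 -> exists N, forall m n, (m >= N)%nat -> (n >= N)%nat ->
     prod_norm (badd (fst (u m)) (bopp (fst (u n))), badd (snd (u m)) (bopp (snd (u n)))) < eps) ->
  exists l, forall eps, eps > 0 -> exists N, forall n, (n >= N)%nat ->
     prod_norm (badd (fst (u n)) (bopp (fst l)), badd (snd (u n)) (bopp (snd l))) < eps.
Proof.
  unfold prod_norm; simpl; intros Hu.
  destruct (bcomplete B (fun n => fst (u n))) as [l1 H1].
  { intros e He; destruct (Hu e He) as [N HN]; exists N; intros m n Hm Hn.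
    specialize (HN m n Hm Hn); pose proof (bnorm_nonneg (bsub (snd (u m)) (snd (u n)))).
    unfold bsub in *; lra. }
  destruct (bcomplete B (fun n => snd (u n))) as [l2 H2].
  { intros e He; destruct (Hu e He) as [N HN]; exists N; intros m n Hm Hn.
    specialize (HN m n Hm Hn); pose proof (bnorm_nonneg (bsub (fst (u m)) (fst (u n)))).
    unfold bsub in *; lra. }
  exists (l1, l2); intros e He; simpl.
  destruct (H1 (e / 2)) as [N1 HN1]; [lra|].
  destruct (H2 (e / 2)) as [N2 HN2]; [lra|].
  exists (Nat.max N1 N2); intros n Hn.
  specialize (HN1 n ltac:(lia)); specialize (HN2 n ltac:(lia)); lra.
Qed.

(* [B x B] with the norm [|x| + |y|]: the real Banach space underlying the complexification. *)
Definition prod_banach : RBanach.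
Proof.
  refine {| bcar := B * B;
            bzero := (bzero, bzero);
            badd p q := (badd (fst p) (fst q), badd (snd p) (snd q));
            bopp p := (bopp (fst p), bopp (snd p));
            bscal a p := (bscal a (fst p), bscal a (snd p));
            bnorm := prod_norm;
            bcomplete := prod_complete |}; unfold prod_norm; simpl.
  - intros; f_equal; apply badd_assoc.
  - intros; f_equal; apply badd_comm.
  - intros [x y]; simpl; f_equal; apply badd_zero.
  - intros [x y]; simpl; f_equal; apply badd_opp.
  - intros [x y]; simpl; f_equal; apply bscal_one.
  - intros; f_equal; apply bscal_assoc.
  - intros; f_equal; apply bscal_distr_l.
  - intros; f_equal; apply bscal_distr_r.
  - intros [x y]; simpl; pose proof (bnorm_nonneg x); pose proof (bnorm_nonneg y); lra.
  - intros [x y] H; simpl in H; pose proof (bnorm_nonneg x); pose proof (bnorm_nonneg y).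
    f_equal; apply bnorm_eq0; lra.
  - intros; rewrite !bnorm_scal; ring.
  - intros [x y] [x' y']; simpl.
    pose proof (bnorm_triangle x x'); pose proof (bnorm_triangle y y'); lra.
Defined.

Definition pmap (f : B -> B) (p : prod_banach) : prod_banach := (f (fst p), f (snd p)).

Lemma is_linear_pmap f : is_linear f -> is_linear (pmap f).
Proof.
  intros Hf; split; intros; unfold pmap; simpl;
    [rewrite !(linear_add f Hf)|rewrite !(linear_scal f Hf)]; reflexivity.
Qed.

Lemma bnorm_pmap_le f C : (forall x, bnorm (f x) <= C * bnorm x) ->
  forall p, bnorm (pmap f p) <= C * bnorm p.
Proof.
  intros Hf [x y]; simpl; unfold prod_norm; simpl.
  pose proof (Hf x); pose proof (Hf y); lra.
Qed.

Lemma zpow_pmap f g n (y1 y2 : B) :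
  zpow (pmap f) (pmap g) n ((y1, y2) : prod_banach) = (zpow f g n y1, zpow f g n y2).
Proof.
  assert (Hiter : forall h k, Nat.iter k (pmap h) ((y1, y2) : prod_banach)
                             = (Nat.iter k h y1, Nat.iter k h y2)).
  { intros h k; induction k as [|k IH]; [reflexivity|].
    change (pmap h (Nat.iter k (pmap h) ((y1, y2) : prod_banach)) = (h (Nat.iter k h y1), h (Nat.iter k h y2))).
    rewrite IH; reflexivity. }
  destruct n; simpl; auto.
Qed.

Lemma shadowing_pmap T Tinv : shadowing_property T Tinv -> shadowing_property (pmap T) (pmap Tinv).
Proof.
  intros Hs e He; destruct (Hs (e / 2)) as [d [Hd Hsh]]; [lra|].
  exists d; split; auto; intros z Hz.
  assert (Hcomp : forall n, bnorm (bsub (fst (z (n + 1)%Z)) (T (fst (z n)))) < d /\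
                            bnorm (bsub (snd (z (n + 1)%Z)) (T (snd (z n)))) < d).
  { intros n; specialize (Hz n); simpl in Hz; unfold prod_norm in Hz; simpl in Hz.
    pose proof (bnorm_nonneg (bsub (fst (z (n + 1)%Z)) (T (fst (z n))))).
    pose proof (bnorm_nonneg (bsub (snd (z (n + 1)%Z)) (T (snd (z n))))).
    unfold bsub in *; lra. }
  destruct (Hsh (fun n => fst (z n))) as [y1 H1]; [intros n; apply Hcomp|].
  destruct (Hsh (fun n => snd (z n))) as [y2 H2]; [intros n; apply Hcomp|].
  exists ((y1, y2) : prod_banach); intros n; rewrite zpow_pmap.
  specialize (H1 n); specialize (H2 n); simpl; unfold prod_norm; simpl.
  unfold bsub in *; lra.
Qed.

End ProductSpace.

Lemma Rabs_sin_sub a b : Rabs (sin a - sin b) <= Rabs (a - b).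
Proof.
  destruct (MVT_abs sin cos b a (fun c _ => derivable_pt_lim_sin c)) as [c [-> _]].
  pose proof (COS_bound c); pose proof (Rabs_pos (a - b)).
  rewrite <- (Rmult_1_l (Rabs (a - b))) at 2.
  apply Rmult_le_compat_r; auto; apply Rabs_le; lra.
Qed.

Lemma Rabs_cos_sub a b : Rabs (cos a - cos b) <= Rabs (a - b).
Proof.
  destruct (MVT_abs cos (fun x => - sin x) b a (fun c _ => derivable_pt_lim_cos c)) as [c [-> _]].
  pose proof (SIN_bound c); pose proof (Rabs_pos (a - b)).
  rewrite <- (Rmult_1_l (Rabs (a - b))) at 2.
  apply Rmult_le_compat_r; auto; rewrite Rabs_Ropp; apply Rabs_le; lra.
Qed.

Section Rotation.
Context {B : RBanach}.
Implicit Types (x y : B) (a b c d : R).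

Definition lincomb x y a b : B := badd (bscal a x) (bscal b y).

Lemma badd_addACA (u v w z : B) : badd (badd u v) (badd w z) = badd (badd u w) (badd v z).
Proof.
  rewrite <- !badd_assoc; f_equal; rewrite !badd_assoc; f_equal; apply badd_comm.
Qed.

Lemma lincomb_lincomb x y a b c d e f :
  lincomb (lincomb x y a b) (lincomb x y c d) e f = lincomb x y (e * a + f * c) (e * b + f * d).
Proof.
  unfold lincomb; rewrite !bscal_distr_l, !bscal_assoc, badd_addACA, !bscal_distr_r; reflexivity.
Qed.

Lemma lincomb_sub x y a b c d : bsub (lincomb x y a b) (lincomb x y c d) = lincomb x y (a - c) (b - d).
Proof.
  unfold lincomb, bsub; rewrite bopp_add, !bopp_scal_r, badd_addACA, <- !bscal_distr_r; reflexivity.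
Qed.

Lemma bnorm_lincomb_le x y a b : bnorm (lincomb x y a b) <= Rabs a * bnorm x + Rabs b * bnorm y.
Proof. unfold lincomb; rewrite <- !bnorm_scal; apply bnorm_triangle. Qed.

Lemma linear_lincomb (f : B -> B) x y a b : is_linear f -> f (lincomb x y a b) = lincomb (f x) (f y) a b.
Proof. intros Hf; unfold lincomb; rewrite (linear_add f Hf), !(linear_scal f Hf); reflexivity. Qed.

(* Multiplication by [e^{it}] on the complexification [B x B]. *)
Definition rot (t : R) (p : prod_banach B) : prod_banach B :=
  (lincomb (fst p) (snd p) (cos t) (- sin t), lincomb (fst p) (snd p) (sin t) (cos t)).

Lemma rot_rot a b p : rot a (rot b p) = rot (a + b) p.
Proof.
  destruct p as [x y]; unfold rot; simpl; rewrite !lincomb_lincomb, cos_plus, sin_plus.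
  f_equal; f_equal; ring.
Qed.

Lemma rot0 p : rot 0 p = p.
Proof.
  destruct p as [x y]; unfold rot, lincomb; simpl.
  rewrite cos_0, sin_0, Ropp_0, !bscal0l, badd_zero, badd0l, !bscal_one; reflexivity.
Qed.

Lemma rotK a p : rot (- a) (rot a p) = p.
Proof. rewrite rot_rot, Rplus_opp_l; apply rot0. Qed.

Lemma lincomb_add x y x' y' a b :
  lincomb (badd x x') (badd y y') a b = badd (lincomb x y a b) (lincomb x' y' a b).
Proof. unfold lincomb; rewrite !bscal_distr_l; apply badd_addACA. Qed.

Lemma lincomb_scal x y s a b : lincomb (bscal s x) (bscal s y) a b = bscal s (lincomb x y a b).
Proof. unfold lincomb; rewrite bscal_distr_l, !bscal_assoc, (Rmult_comm a), (Rmult_comm b); reflexivity. Qed.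

Lemma is_linear_rot t : is_linear (rot t).
Proof.
  split; [intros [x y] [x' y']|intros s [x y]]; unfold rot; simpl;
    [rewrite !lincomb_add|rewrite !lincomb_scal]; reflexivity.
Qed.

Lemma pmap_rot (f : B -> B) t p : is_linear f -> pmap B f (rot t p) = rot t (pmap B f p).
Proof. intros Hf; destruct p as [x y]; unfold pmap, rot; simpl; rewrite !(linear_lincomb f); auto. Qed.

Lemma bnorm_rot_le t p : bnorm (rot t p) <= 2 * bnorm p.
Proof.
  destruct p as [x y]; simpl; unfold prod_norm; simpl.
  pose proof (bnorm_lincomb_le x y (cos t) (- sin t)); pose proof (bnorm_lincomb_le x y (sin t) (cos t)).
  rewrite Rabs_Ropp in H.
  assert (Rabs (cos t) <= 1) by (pose proof (COS_bound t); apply Rabs_le; lra).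
  assert (Rabs (sin t) <= 1) by (pose proof (SIN_bound t); apply Rabs_le; lra).
  pose proof (bnorm_nonneg x); pose proof (bnorm_nonneg y).
  pose proof (Rmult_le_compat_r _ _ _ H3 H1); pose proof (Rmult_le_compat_r _ _ _ H4 H1).
  pose proof (Rmult_le_compat_r _ _ _ H3 H2); pose proof (Rmult_le_compat_r _ _ _ H4 H2).
  lra.
Qed.

Lemma bnorm_rot_sub a b p : bnorm (bsub (rot a p) (rot b p)) <= 4 * Rabs (a - b) * bnorm p.
Proof.
  destruct p as [x y]; simpl; unfold prod_norm; simpl.
  fold (bsub (lincomb x y (cos a) (- sin a)) (lincomb x y (cos b) (- sin b))).
  fold (bsub (lincomb x y (sin a) (cos a)) (lincomb x y (sin b) (cos b))).
  rewrite !lincomb_sub; replace (- sin a - - sin b) with (- (sin a - sin b)) by ring.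
  pose proof (bnorm_lincomb_le x y (cos a - cos b) (- (sin a - sin b))).
  pose proof (bnorm_lincomb_le x y (sin a - sin b) (cos a - cos b)).
  rewrite Rabs_Ropp in H.
  pose proof (Rabs_cos_sub a b); pose proof (Rabs_sin_sub a b).
  pose proof (bnorm_nonneg x); pose proof (bnorm_nonneg y).
  pose proof (Rmult_le_compat_r _ _ _ H3 H1); pose proof (Rmult_le_compat_r _ _ _ H4 H1).
  pose proof (Rmult_le_compat_r _ _ _ H3 H2); pose proof (Rmult_le_compat_r _ _ _ H4 H2).
  pose proof (Rmult_le_pos _ _ (Rabs_pos (a - b)) H3); pose proof (Rmult_le_pos _ _ (Rabs_pos (a - b)) H4).
  lra.
Qed.

End Rotation.

Section Complexification.
Context {B : RBanach} (T Tinv : B -> B).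
Hypothesis T_aut : is_aut_with_inverse T Tinv.
Hypothesis T_shadowing : shadowing_property T Tinv.

Local Notation E := (prod_banach B).
Local Notation TC := (pmap B T).

Lemma T_linear : is_linear T.
Proof. apply bounded_linear_is_linear, T_aut. Qed.

Lemma Tinv_linear : is_linear Tinv.
Proof. apply bounded_linear_is_linear, T_aut. Qed.

Lemma TC_linear : is_linear TC.
Proof. apply is_linear_pmap, T_linear. Qed.

Definition cshift (t : R) (p : E) : E := bsub (TC p) (rot t p).

Lemma complexified_shift_cos_sin t p : complexified_shift T (cos t) (sin t) p = cshift t p.
Proof.
  destruct p as [x y]; unfold complexified_shift, cshift, pmap, rot, lincomb, bsub; simpl.
  rewrite !bopp_add, !bopp_scal_r, Ropp_involutive, !badd_assoc; reflexivity.
Qed.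

Lemma is_linear_cshift t : is_linear (cshift t).
Proof. apply is_linear_sub; [apply TC_linear|apply is_linear_rot]. Qed.

Lemma cshift_bounded : exists C, forall t p, bnorm (cshift t p) <= C * bnorm p.
Proof.
  destruct T_aut as [[_ [_ [C HC]]] _].
  exists (C + 2); intros t p.
  pose proof (bnorm_sub_le (TC p) (rot t p)); pose proof (bnorm_pmap_le B T C HC p).
  pose proof (bnorm_rot_le t p); unfold cshift; lra.
Qed.

Lemma TC_shadowing_bound : exists K, K > 0 /\
  forall eta, eta > 0 -> forall x : Z -> E, pseudo_orbit TC eta x ->
  exists y, forall n : nat, bnorm (bsub (x (Z.of_nat n)) (Nat.iter n TC y)) < K * eta.
Proof.
  destruct (shadowing_linear_bound TC (pmap B Tinv) TC_linear (is_linear_pmap B Tinv Tinv_linear)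
              (shadowing_pmap B T Tinv T_shadowing)) as [K [HK Hsh]].
  exists K; split; auto; intros eta Heta x Hx.
  destruct (Hsh eta Heta x Hx) as [y Hy]; exists y; intros n.
  specialize (Hy (Z.of_nat n)); destruct n; simpl in *; auto.
  rewrite SuccNat2Pos.id_succ in Hy; exact Hy.
Qed.

(* Untwisting a bounded solution of [w_{k+1} = T_C w_k - e^{ikt} r] by [e^{-ikt}]
   gives a sequence on which [cshift t . - r] telescopes. *)
Lemma twisted_orbit_cesaro t r (w : nat -> E) M n :
  (forall k, bnorm (w k) <= M) ->
  (forall k, w (S k) = bsub (TC (w k)) (rot (INR k * t) r)) -> (0 < n)%nat ->
  bnorm (bsub (cshift t (cesaro (fun k => rot (- (INR k * t)) (w k)) n)) r) <= 4 * M / INR n.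
Proof.
  intros Hw Hrec Hn.
  replace (4 * M) with (2 * (2 * M)) by ring.
  apply (cesaro_telescope _ _ (fun k => rot t (rot (- (INR k * t)) (w k)))); auto.
  - apply is_linear_cshift.
  - intros k; unfold cshift; rewrite bsub_subC; f_equal.
    rewrite rot_rot, Hrec, (linear_sub _ (is_linear_rot _)), rot_rot, S_INR.
    replace (t + - ((INR k + 1) * t) + INR k * t) with 0 by ring.
    replace (t + - ((INR k + 1) * t)) with (- (INR k * t)) by ring.
    rewrite rot0, pmap_rot by apply T_linear; reflexivity.
  - intros k; rewrite rot_rot; eapply Rle_trans; [apply bnorm_rot_le|].
    pose proof (Hw k); lra.
Qed.

Fixpoint forced_orbit (t : R) (r : E) (n : nat) : E :=
  match n with
  | O => bzero
  | S k => bsub (TC (forced_orbit t r k)) (rot (INR k * t) r)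
  end.

Lemma cshift_surjective t c : c > 0 -> (forall p, c * bnorm p <= bnorm (cshift t p)) ->
  forall r, exists p, cshift t p = r.
Proof.
  intros Hc Hbelow r.
  destruct TC_shadowing_bound as [K [HK Hsh]].
  destruct cshift_bounded as [C HC].
  assert (Hr : 0 <= bnorm r) by apply bnorm_nonneg.
  destruct (Hsh (2 * bnorm r + 1) ltac:(lra) (fun z => forced_orbit t r (Z.to_nat z))) as [y Hy].
  { intros z; destruct (Z_lt_le_dec z 0).
    - replace (Z.to_nat (z + 1)) with O by lia; replace (Z.to_nat z) with O by lia; cbn [forced_orbit].
      rewrite (linear0 _ TC_linear), bsub_diag, bnorm0; lra.
    - replace (Z.to_nat (z + 1)) with (S (Z.to_nat z)) by lia; cbn [forced_orbit].
      rewrite bsub_subC, bsub_diag, bnorm_sub0l.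
      pose proof (bnorm_rot_le (INR (Z.to_nat z) * t) r); lra. }
  set (w := fun n => bsub (forced_orbit t r n) (Nat.iter n TC y)).
  set (D := K * (2 * bnorm r + 1)).
  apply (bounded_below_solve (cshift t) (is_linear_cshift t) C c (HC t) Hc Hbelow
           (fun k => cesaro (fun n => rot (- (INR n * t)) (w n)) (S k)) r (4 * D)).
  intros k; apply twisted_orbit_cesaro; try lia.
  - intros n; specialize (Hy n); rewrite Nat2Z.id in Hy; unfold w, D; lra.
  - intros n; unfold w; cbn [forced_orbit].
    rewrite bsub_subC, (linear_sub _ TC_linear); reflexivity.
Qed.

Definition approx_point_spectrum (t : R) : Prop :=
  forall eta, eta > 0 -> exists p, bnorm (cshift t p) < eta * bnorm p.

Lemma approx_point_spectrum_of_spectrum t :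
  in_spectrum T (cos t) (sin t) -> approx_point_spectrum t.
Proof.
  intros Hsp eta Heta; apply NNPP; intros Hno; apply Hsp.
  assert (Hbelow : forall p, eta * bnorm p <= bnorm (cshift t p)).
  { intros p; apply Rnot_lt_le; intros Hp; apply Hno; exists p; exact Hp. }
  split.
  - intros p q; rewrite !complexified_shift_cos_sin.
    apply (bounded_below_inj _ (is_linear_cshift t) eta Heta Hbelow).
  - intros r; destruct (cshift_surjective t eta Heta Hbelow r) as [p Hp].
    exists p; rewrite complexified_shift_cos_sin; exact Hp.
Qed.

Lemma rotating_orbit_shadowed : exists c, c > 0 /\ forall t t' p,
  bnorm (cshift t p) < c * bnorm p -> Rabs (t' - t) <= c ->
  exists y, forall n : nat, bnorm (bsub (rot (INR n * t') p) (Nat.iter n TC y)) < bnorm p / 8.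
Proof.
  destruct TC_shadowing_bound as [K [HK Hsh]].
  set (c := / (80 * K)).
  assert (Hc : c > 0) by (apply Rinv_0_lt_compat; lra).
  exists c; split; auto; intros t t' p Hp Htt'.
  assert (Hp0 : bnorm p > 0) by (pose proof (bnorm_nonneg (cshift t p)); nra).
  destruct (Hsh (10 * c * bnorm p)) with (x := fun n => rot (IZR n * t') p) as [y Hy].
  { apply Rmult_lt_0_compat; lra. }
  { intros n; cbv beta; rewrite plus_IZR.
    replace ((IZR n + 1) * t') with (IZR n * t' + t') by ring.
    rewrite <- rot_rot, pmap_rot by apply T_linear.
    rewrite <- (linear_sub _ (is_linear_rot _)).
    eapply Rle_lt_trans; [apply bnorm_rot_le|].
    pose proof (bnorm_sub_triangle (rot t' p) (rot t p) (pmap B T p)).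
    pose proof (bnorm_rot_sub t' t p); unfold cshift in Hp; rewrite bnorm_subC in Hp.
    assert (4 * Rabs (t' - t) * bnorm p <= 4 * c * bnorm p) by (apply Rmult_le_compat_r; lra).
    lra. }
  exists y; intros n; specialize (Hy n); rewrite <- INR_IZR_INZ in Hy.
  replace (bnorm p / 8) with (K * (10 * c * bnorm p)) by (unfold c; field; lra); exact Hy.
Qed.

(* Averaging the untwisted shadow of the rotating orbit [n |-> e^{int'} p] of an
   approximate eigenvector [p] for [e^{it}] gives one for [e^{it'}]. *)
Lemma approx_point_spectrum_near : exists c, c > 0 /\
  forall t t', approx_point_spectrum t -> Rabs (t' - t) <= c -> approx_point_spectrum t'.
Proof.
  destruct rotating_orbit_shadowed as [c [Hc Hshadow]].
  exists c; split; auto; intros t t' Ht Htt' eta Heta.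
  destruct (Ht c Hc) as [p Hp].
  assert (Hp0 : bnorm p > 0) by (pose proof (bnorm_nonneg (cshift t p)); nra).
  destruct (Hshadow t t' p Hp Htt') as [y Hy].
  set (w := fun n => Nat.iter n (pmap B T) y).
  set (u := fun n => rot (- (INR n * t')) (w n)).
  assert (Hu : forall n, bnorm (bsub (u n) p) <= bnorm p / 4).
  { intros n; specialize (Hy n); fold (w n) in Hy.
    unfold u; rewrite <- (rotK (INR n * t') p) at 1.
    rewrite <- (linear_sub _ (is_linear_rot _)).
    eapply Rle_trans; [apply bnorm_rot_le|]; rewrite bnorm_subC; lra. }
  assert (Hw : forall n, bnorm (w n) <= 17 / 8 * bnorm p).
  { intros n; specialize (Hy n); fold (w n) in Hy.
    pose proof (bnorm_sub_ge (w n) (rot (INR n * t') p)); rewrite bnorm_subC in H.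
    pose proof (bnorm_rot_le (INR n * t') p); lra. }
  destruct (eventually_div_lt (17 / 2 * bnorm p) (3 / 4 * eta * bnorm p)) as [N HN].
  { apply Rmult_lt_0_compat; lra. }
  specialize (HN N (le_n N)).
  exists (cesaro u (S N)).
  assert (Hv : bnorm (bsub (cesaro u (S N)) p) <= bnorm p / 4).
  { rewrite cesaro_sub by lia; apply bnorm_cesaro_le; auto; lia. }
  pose proof (bnorm_sub_ge p (cesaro u (S N))); rewrite bnorm_subC in H.
  assert (Hcs : bnorm (cshift t' (cesaro u (S N))) <= 4 * (17 / 8 * bnorm p) / INR (S N)).
  { rewrite <- (bsub0r (cshift t' _)).
    apply (twisted_orbit_cesaro t' bzero w); auto; try lia.
    intros n; rewrite (linear0 _ (is_linear_rot _)), bsub0r; reflexivity. }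
  replace (4 * (17 / 8 * bnorm p) / INR (S N)) with (17 / 2 * bnorm p / INR (S N)) in Hcs
    by (field; apply not_0_INR; lia).
  assert (3 / 4 * eta * bnorm p <= eta * bnorm (cesaro u (S N))).
  { replace (3 / 4 * eta * bnorm p) with (eta * (3 / 4 * bnorm p)) by ring.
    apply Rmult_le_compat_l; lra. }
  lra.
Qed.

Lemma approx_point_spectrum_everywhere t t' :
  approx_point_spectrum t -> approx_point_spectrum t'.
Proof.
  intros Ht; destruct approx_point_spectrum_near as [c [Hc Hnear]].
  assert (Hsteps : forall k h, Rabs h <= c -> approx_point_spectrum (t + INR k * h)).
  { induction k as [|k IH]; intros h Hh.
    - simpl; rewrite Rmult_0_l, Rplus_0_r; exact Ht.
    - apply (Hnear (t + INR k * h)); [apply IH; auto|].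
      rewrite S_INR; replace (t + (INR k + 1) * h - (t + INR k * h)) with h by ring; exact Hh. }
  destruct (INR_archimed c (Rabs (t' - t)) Hc) as [k Hk].
  assert (Hk0 : 0 < INR k) by (pose proof (Rabs_pos (t' - t)); nra).
  replace t' with (t + INR k * ((t' - t) / INR k)) by (field; lra).
  apply Hsteps; unfold Rdiv; rewrite Rabs_mult, Rabs_inv, (Rabs_pos_eq (INR k)) by lra.
  apply (Rmult_le_reg_r (INR k)); auto; rewrite Rmult_assoc, Rinv_l by lra; lra.
Qed.

Lemma approx_fixed_unit_vector : approx_point_spectrum 0 ->
  forall d, d > 0 -> exists v, bnorm v = 1 /\ bnorm (bsub (T v) v) < d.
Proof.
  intros H0 d Hd; destruct (H0 d Hd) as [[x y] Hp].
  unfold cshift in Hp; rewrite rot0 in Hp; simpl in Hp; unfold prod_norm in Hp; simpl in Hp.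
  assert (Hnormalize : forall w, bnorm (bsub (T w) w) < d * bnorm w ->
            exists v, bnorm v = 1 /\ bnorm (bsub (T v) v) < d).
  { intros w Hw; assert (Hw0 : bnorm w > 0) by (pose proof (bnorm_nonneg (bsub (T w) w)); nra).
    exists (bscal (/ bnorm w) w); split; [apply bnorm_normalize; auto|].
    rewrite (linear_scal _ T_linear), <- bscal_sub, bnorm_scal.
    rewrite Rabs_pos_eq by (left; apply Rinv_0_lt_compat; auto).
    apply (Rmult_lt_reg_l (bnorm w)); auto.
    rewrite <- Rmult_assoc, Rinv_r by lra; lra. }
  destruct (Rlt_or_le (bnorm (bsub (T x) x)) (d * bnorm x)); [apply (Hnormalize x); auto|].
  apply (Hnormalize y); fold (bsub (T x) x) (bsub (T y) y) in Hp; lra.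
Qed.

End Complexification.

Lemma unit_circle_angle a b : a * a + b * b = 1 -> exists t, cos t = a /\ sin t = b.
Proof.
  intros H; assert (Ha : -1 <= a <= 1) by nra.
  assert (Hs : sqrt (1 - a²) = Rabs b).
  { replace (1 - a²) with (Rabs b)² by (unfold Rsqr; rewrite <- Rabs_mult, Rabs_pos_eq; nra).
    apply sqrt_Rsqr, Rabs_pos. }
  destruct (Rle_lt_dec 0 b).
  - exists (acos a); rewrite cos_acos, sin_acos, Hs, Rabs_pos_eq by auto; auto.
  - exists (- acos a); rewrite cos_neg, sin_neg, cos_acos, sin_acos, Hs, Rabs_left by auto.
    split; auto; ring.
Qed.

Lemma not_hyperbolic_spectrum_angle {B : RBanach} (T : B -> B) :
  ~ hyperbolic T -> exists t, in_spectrum T (cos t) (sin t).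
Proof.
  intros Hnh; apply NNPP; intros Hno; apply Hnh; intros a b Hab Hsp.
  destruct (unit_circle_angle a b Hab) as [t [<- <-]]; apply Hno; exists t; exact Hsp.
Qed.

Theorem mainTheorem17 (B : RBanach) (T S : B -> B) :
  is_aut_with_inverse T S ->
  shadowing_property T S ->
  ~ hyperbolic T ->
  forall eps : R, eps > 0 ->
    exists x : B, forall n : Z,
      1 - eps < bnorm (zpow T S n x) < 1 + eps.
Proof.
  intros Haut Hsh Hnh eps Heps.
  destruct (not_hyperbolic_spectrum_angle T Hnh) as [t Hspec].
  assert (H0 : approx_point_spectrum T 0).
  { apply (approx_point_spectrum_everywhere T S Haut Hsh t 0).
    apply (approx_point_spectrum_of_spectrum T S Haut Hsh t Hspec). }
  destruct (Hsh eps Heps) as [d [Hd Hshd]].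
  destruct (approx_fixed_unit_vector T S Haut H0 d Hd) as [v [Hv1 Hv2]].
  destruct (Hshd (fun _ => v)) as [x Hx].
  { intros n; rewrite bnorm_subC; exact Hv2. }
  exists x; intros n; specialize (Hx n).
  pose proof (bnorm_sub_ge v (zpow T S n x)); pose proof (bnorm_sub_ge (zpow T S n x) v).
  rewrite bnorm_subC in H1; lra.
Qed.
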